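(* Let $A=(Q,q_0,\Sigma,\delta,\alpha)$ with $Q_d\subseteq Q$ be an LDBA, let $\mathsf{Ord}$ be an ordering of the states of $A$ w.r.t. $Q_d$, and let $w\in\Sigma^\omega$. For every $i\ge 0$ and any two distinct vertices $v,v'\in V^d_i$ of the run DAG $G_w$, either $v\sqsubset_i v'$ or $v'\sqsubset_i v$. That is, $\sqsubset_i$ is a strict total order on $V^d_i$.
   Context: A (transition-based) nondeterministic Büchi automaton is $A=(Q,q_0,\Sigma,\delta,\alpha)$ with finite state set $Q$, initial state $q_0\in Q$, finite alphabet $\Sigma$, total transition relation $\delta\subseteq Q\times\Sigma\times Q$ (for all $q,\sigma$ there is some $q'$ with $(q,\sigma,q')\in\delta$), and accepting transitions $\alpha\subseteq\delta$. A run on an $\omega$-word $w$ is $\rho:\mathbb N\to Q$ with $\rho(0)=q_0$ and $(\rho(i),w(i),\rho(i+1))\in\delta$ for all $i$. It is accepting if $(\rho(i),w(i),\rho(i+1))\in\alpha$ for infinitely many $i$. $\mathsf L(A)$ is the set of words having an accepting run. An LDBA is such an automaton together with $Q_d\subseteq Q$ such that: (1) $\alpha\subseteq Q_d\times\Sigma\times Q_d$; (2) for every $q\in Q_d$ and $\sigma\in\Sigma$ there is exactly one $q'$ with $(q,\sigma,q')\in\delta$, written $\delta(q,\sigma)$; (3) if $q\in Q_d$ and $(q,\sigma,q')\in\delta$ then $q'\in Q_d$. It is assumed that $q_0\notin Q_d$, and $\overline{Q_d}=Q\setminus Q_d$. The run DAG of $A$ on $w$ is $G_w=(V,E)$ with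 $V=\bigcup_i V_i$, where $V_0=\{(q_0,0)\}$, $V_i=\{(q,i)\mid \exists (q',i-1)\in V_{i-1}:(q',w(i-1),q)\in\delta\}$ for $i\ge1$, and $E=\{((q,i),(q',i+1))\in V_i\times V_{i+1}\mid (q,w(i),q')\in\delta\}$. Let $V^d_i=V_i\cap(Q_d\times\{i\})$. Runs are paths of $G_w$ starting at $(q_0,0)$; a run prefix of length $n+1$ is such a path $v_0\dots v_n$ with $v_j\in V_j$. An ordering of the states of $A$ w.r.t. $Q_d$ is a function $\mathsf{Ord}:Q\to\{1,\dots,|Q_d|,+\infty\}$ with $\mathsf{Ord}(q)=+\infty$ for $q\in\overline{Q_d}$, $\mathsf{Ord}(q)\neq+\infty$ for $q\in Q_d$, and $\mathsf{Ord}$ injective on $Q_d$; set $\mathsf{Ord}((q,i))=\mathsf{Ord}(q)$ (with $+\infty$ greater than all integers). For run prefixes $\rho(0..n),\rho'(0..n)$ of length $n+1$, $\rho(0..n)\sqsubseteq\rho'(0..n)$ iff either $\mathsf{Ord}(\rho(i))=\mathsf{Ord}(\rho'(i))$ for all $0\le i\le n$, or there is $i\le n$ with $\mathsf{Ord}(\rho(i))<\mathsf{Ord}(\rho'(i))$ and $\mathsf{Ord}(\rho(j))=\mathsf{Ord}(\rho'(j))$ for all $j<i$. For distinct $v,v'\in V_i$, $v\sqsubset_i v'$ iff there is a run prefix ending in $v$ that is $\sqsubseteq$-smaller than all run prefixes ending in $v'$. *)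

From mathcomp Require Import all_boot.
Set Implicit Arguments. Unset Strict Implicit. Unset Printing Implicit Defensive.

Definition total_rel (Q Sigma : finType) (delta : Q -> Sigma -> Q -> bool) : Prop :=
  forall q s, exists q', delta q s q'.

Definition is_LDBA (Q Sigma : finType) (q0 : Q) (delta alpha : Q -> Sigma -> Q -> bool)
  (Qd : {set Q}) : Prop :=
  [/\ total_rel delta,
      (forall q s q', alpha q s q' -> delta q s q') /\ q0 \notin Qd,
      (forall q s q', alpha q s q' -> (q \in Qd) && (q' \in Qd)),
      (forall q s, q \in Qd -> exists q', delta q s q' /\ forall q'', delta q s q'' -> q'' = q')
    & (forall q s q', q \in Qd -> delta q s q' -> q' \in Qd)].

(* Values of Ord: Some k = the integer k, None = +infinity. *)
Definition ordlt (a b : option nat) : bool :=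
  match a, b with
  | Some x, Some y => x < y
  | Some _, None => true
  | None, _ => false
  end.

Definition is_ordering (Q : finType) (Qd : {set Q}) (Ord : Q -> option nat) : Prop :=
  [/\ (forall q, q \notin Qd -> Ord q = None),
      (forall q, q \in Qd -> exists k, Ord q = Some k /\ 1 <= k <= #|Qd|)
    & (forall q q', q \in Qd -> q' \in Qd -> Ord q = Ord q' -> q = q')].

(* Level sets of the run DAG: (q, i) \in V_i iff inV i q. *)
Fixpoint inV (Q Sigma : finType) (q0 : Q) (delta : Q -> Sigma -> Q -> bool)
  (w : nat -> Sigma) (i : nat) (q : Q) : bool :=
  match i with
  | 0 => q == q0
  | i'.+1 => [exists q', inV q0 delta w i' q' && delta q' (w i') q]
  end.

(* A run prefix of length n+1, represented by its sequence of states
   (the vertex at position j is (nth q0 p j, j)). *)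
Definition run_prefix (Q Sigma : finType) (q0 : Q) (delta : Q -> Sigma -> Q -> bool)
  (w : nat -> Sigma) (n : nat) (p : seq Q) : Prop :=
  [/\ size p = n.+1, nth q0 p 0 = q0 &
      forall j, j < n -> delta (nth q0 p j) (w j) (nth q0 p j.+1)].

Definition prefix_le (Q : finType) (q0 : Q) (Ord : Q -> option nat) (n : nat)
  (p p' : seq Q) : Prop :=
  (forall i, i <= n -> Ord (nth q0 p i) = Ord (nth q0 p' i)) \/
  (exists i, [/\ i <= n, ordlt (Ord (nth q0 p i)) (Ord (nth q0 p' i)) &
                forall j, j < i -> Ord (nth q0 p j) = Ord (nth q0 p' j)]).

Definition dag_lt (Q Sigma : finType) (q0 : Q) (delta : Q -> Sigma -> Q -> bool)
  (Ord : Q -> option nat) (w : nat -> Sigma) (i : nat) (v v' : Q) : Prop :=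
  exists p, [/\ run_prefix q0 delta w i p, nth q0 p i = v &
    forall p', run_prefix q0 delta w i p' -> nth q0 p' i = v' -> prefix_le q0 Ord i p p'].

Definition inVd (Q Sigma : finType) (q0 : Q) (delta : Q -> Sigma -> Q -> bool)
  (Qd : {set Q}) (w : nat -> Sigma) (i : nat) (q : Q) : bool :=
  (q \in Qd) && inV q0 delta w i q.

From Stdlib Require Import Classical.
From mathcomp Require Import all_boot.

Set Implicit Arguments.
Unset Strict Implicit.
Unset Printing Implicit Defensive.

(* The relation ⊑ on run prefixes of length i+1 is the lexicographic preorder
   of their Ord-sequences, hence total and transitive.  There are finitely
   many run prefixes, so among those ending in v or v' some is ⊑-least: it
   witnesses v ⊏_i v' or v' ⊏_i v.  If both hold, the two witnesses are
   ⊑-equivalent, so v and v' have the same Ord value and coincide, Ord being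
   injective on Q_d.  Nothing else about the LDBA or the ordering is used. *)

Section Lexicographic.

Variables (T : eqType) (lt : rel T).
Hypotheses (ltxx : irreflexive lt) (lt_trans : transitive lt)
           (lt_total : forall x y, x != y -> lt x y || lt y x).

Definition lex_le (n : nat) (a b : nat -> T) : Prop :=
  (forall i, i <= n -> a i = b i) \/
  (exists i, [/\ i <= n, lt (a i) (b i) & forall j, j < i -> a j = b j]).

Lemma lt_trichotomy x y : [\/ x = y, lt x y | lt y x].
Proof.
case: (eqVneq x y) => [->|/lt_total/orP [lt_xy|lt_yx]]; first by constructor 1.
- by constructor 2.
- by constructor 3.
Qed.

Lemma lex_le_eq_below n a b :
  (forall i, i < n -> a i = b i) -> lex_le n a b \/ lex_le n b a.
Proof.
move=> eq_lt; case: (lt_trichotomy (a n) (b n)) => [eq_n|lt_n|lt_n].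
- by left; left => i; rewrite leq_eqVlt => /orP [/eqP ->|/eq_lt].
- by left; right; exists n.
- by right; right; exists n; split=> // j /eq_lt.
Qed.

Lemma lex_le_total n a b : lex_le n a b \/ lex_le n b a.
Proof.
elim: n => [|n IH]; first exact: lex_le_eq_below.
have extend c d : (exists i, [/\ i <= n, lt (c i) (d i) & forall j, j < i -> c j = d j]) ->
    lex_le n.+1 c d.
  by case=> i [le_in lt_i eq_lt]; right; exists i; split=> //; apply: leqW.
case: IH => [[eq_ab|/extend lt_ab]|[eq_ba|/extend lt_ba]].
- exact: lex_le_eq_below.
- by left.
- by apply: lex_le_eq_below => i /eq_ba.
- by right.
Qed.

Lemma lex_le_trans n a b c : lex_le n a b -> lex_le n b c -> lex_le n a c.
Proof.
move=> [eq_ab|[i [le_in lt_i eq_ab]]] [eq_bc|[j [le_jn lt_j eq_bc]]].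
- by left => k le_kn; rewrite eq_ab ?eq_bc.
- right; exists j; split; rewrite ?eq_ab // => k lt_kj.
  by rewrite eq_ab ?eq_bc // (leq_trans (ltnW lt_kj)).
- right; exists i; split; rewrite -?eq_bc // => k lt_ki.
  by rewrite eq_ab ?eq_bc // (leq_trans (ltnW lt_ki)).
- right; case: (ltngtP i j) => [lt_ij|lt_ji|eq_ij]; last subst j.
  + exists i; split; rewrite -?eq_bc // => k lt_ki.
    by rewrite eq_ab ?eq_bc // (ltn_trans lt_ki).
  + exists j; split; rewrite ?eq_ab // => k lt_kj.
    by rewrite eq_ab ?eq_bc // (ltn_trans lt_kj).
  + exists i; split; first by [].
    * exact: lt_trans lt_i lt_j.
    * by move=> k lt_ki; rewrite eq_ab ?eq_bc.
Qed.

Lemma lex_le_anti n a b : lex_le n a b -> lex_le n b a -> forall i, i <= n -> a i = b i.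
Proof.
have lt_irr x y : x = y -> lt x y -> False by move=> ->; rewrite ltxx.
move=> [//|[i [le_in lt_i eq_ab]]] [eq_ba|[j [le_jn lt_j eq_ba]]].
- by case: (lt_irr _ _ (esym (eq_ba i le_in)) lt_i).
- case: (ltngtP i j) => [lt_ij|lt_ji|eq_ij]; last subst j.
  + by case: (lt_irr _ _ (esym (eq_ba i lt_ij)) lt_i).
  + by case: (lt_irr _ _ (esym (eq_ab j lt_ji)) lt_j).
  + by move: (lt_trans lt_i lt_j); rewrite ltxx.
Qed.

End Lexicographic.

Lemma exists_least_in_seq (T : eqType) (R : T -> T -> Prop) (P : T -> Prop) :
    (forall x y, R x y \/ R y x) -> (forall x y z, R x y -> R y z -> R x z) ->
  forall s : seq T, (exists2 x, x \in s & P x) ->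
  exists2 m, P m & forall y, y \in s -> P y -> R m y.
Proof.
move=> R_total R_trans; have R_refl x : R x x by case: (R_total x x).
elim=> [|a s IH] [x]; rewrite ?inE // => x_in Px.
case: (classic (exists2 y, y \in s & P y)) => [/IH [m Pm m_least]|no_P].
- have [Pa|] := classic (P a); last first.
    by exists m => // y; rewrite inE => /predU1P [->|/m_least].
  case: (R_total m a) => [Rma|Ram].
  + by exists m => // y; rewrite inE => /predU1P [->|/m_least].
  + exists a => // y; rewrite inE => /predU1P [-> //|y_in Py].
    exact: R_trans Ram (m_least _ y_in Py).
- have Pa : P a by case/predU1P: x_in => [<- //|x_in]; case: no_P; exists x.
  exists a => // y; rewrite inE => /predU1P [-> //|y_in Py].
  by case: no_P; exists y.
Qed.

Lemma ordltxx : irreflexive ordlt.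
Proof. by case=> //= x; rewrite ltnn. Qed.

Lemma ordlt_trans : transitive ordlt.
Proof. by case=> [y|] [x|] [z|] //=; apply: ltn_trans. Qed.

Lemma ordlt_total x y : x != y -> ordlt x y || ordlt y x.
Proof. by case: x y => [x|] [y|] //=; rewrite eqE /= -neq_ltn. Qed.

Section RunDAG.

Variables (Q Sigma : finType) (q0 : Q) (delta : Q -> Sigma -> Q -> bool).
Variables (Ord : Q -> option nat) (w : nat -> Sigma).

Lemma prefix_le_total n p p' : prefix_le q0 Ord n p p' \/ prefix_le q0 Ord n p' p.
Proof. exact: lex_le_total ordlt_total _ _ _. Qed.

Lemma prefix_le_trans n p p' p'' :
  prefix_le q0 Ord n p p' -> prefix_le q0 Ord n p' p'' -> prefix_le q0 Ord n p p''.
Proof. exact: lex_le_trans ordlt_trans _ _ _ _. Qed.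

Lemma prefix_le_anti n p p' :
  prefix_le q0 Ord n p p' -> prefix_le q0 Ord n p' p ->
  Ord (nth q0 p n) = Ord (nth q0 p' n).
Proof. by move=> le_pp' le_p'p; apply: (lex_le_anti ordltxx ordlt_trans le_pp' le_p'p). Qed.

Lemma run_prefix_rcons n p q :
  run_prefix q0 delta w n p -> delta (nth q0 p n) (w n) q ->
  run_prefix q0 delta w n.+1 (rcons p q).
Proof.
case=> size_p head_p step_p last_step; split; first by rewrite size_rcons size_p.
  by rewrite nth_rcons size_p.
move=> j; rewrite ltnS leq_eqVlt => /predU1P [->|lt_jn].
  by rewrite !nth_rcons size_p ltnSn ltnn eqxx.
by rewrite !nth_rcons size_p !ltnS lt_jn (ltnW lt_jn); apply: step_p.
Qed.

Lemma inV_run_prefix i q :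
  inV q0 delta w i q -> exists2 p, run_prefix q0 delta w i p & nth q0 p i = q.
Proof.
elim: i q => [|i IH] q /=; first by move=> /eqP ->; exists [:: q0].
case/existsP=> q' /andP [/IH [p run_p last_p] step_q].
exists (rcons p q); first by apply: run_prefix_rcons; rewrite // last_p.
by case: run_p => size_p _ _; rewrite nth_rcons size_p ltnn eqxx.
Qed.

Lemma run_prefix_codom n p :
  run_prefix q0 delta w n p -> p \in codom (@tval n.+1 Q).
Proof. by case=> /eqP size_p _ _; exact: (codom_f _ (Tuple size_p)). Qed.

Lemma dag_lt_total i v v' :
  inV q0 delta w i v -> dag_lt q0 delta Ord w i v v' \/ dag_lt q0 delta Ord w i v' v.
Proof.
move=> /inV_run_prefix [p run_p last_p].
pose ends_in_v_or_v' r := run_prefix q0 delta w i r /\ (nth q0 r i = v \/ nth q0 r i = v').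
have [|m [run_m [last_m|last_m]] m_least] :=
  exists_least_in_seq (@prefix_le_total i) (@prefix_le_trans i) (P := ends_in_v_or_v')
    (s := codom (@tval i.+1 Q)).
- by exists p; [apply: run_prefix_codom | split; auto].
- by left; exists m; split=> // p' run_p' last_p'; apply: m_least;
    [apply: run_prefix_codom | split; auto].
- by right; exists m; split=> // p' run_p' last_p'; apply: m_least;
    [apply: run_prefix_codom | split; auto].
Qed.

Lemma dag_lt_trans i v v' v'' :
  dag_lt q0 delta Ord w i v v' -> dag_lt q0 delta Ord w i v' v'' ->
  dag_lt q0 delta Ord w i v v''.
Proof.
case=> p [run_p last_p p_le] [p' [run_p' last_p' p'_le]].
exists p; split=> // p'' run_p'' last_p''.
exact: prefix_le_trans (p_le _ run_p' last_p') (p'_le _ run_p'' last_p'').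
Qed.

Lemma dag_lt_asym (Qd : {set Q}) i v v' :
  {in Qd &, injective Ord} -> v \in Qd -> v' \in Qd ->
  dag_lt q0 delta Ord w i v v' -> dag_lt q0 delta Ord w i v' v -> v = v'.
Proof.
move=> Ord_inj Qd_v Qd_v' [p [run_p last_p p_le]] [p' [run_p' last_p' p'_le]].
apply: Ord_inj => //; rewrite -last_p -last_p'.
exact: prefix_le_anti (p_le _ run_p' last_p') (p'_le _ run_p last_p).
Qed.

End RunDAG.

Theorem mainTheorem1 (Q Sigma : finType) (q0 : Q)
  (delta alpha : Q -> Sigma -> Q -> bool) (Qd : {set Q})
  (Ord : Q -> option nat) (w : nat -> Sigma) :
  is_LDBA q0 delta alpha Qd ->
  is_ordering Qd Ord ->
  forall i : nat,
    (forall v v', inVd q0 delta Qd w i v -> inVd q0 delta Qd w i v' -> v <> v' ->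
       dag_lt q0 delta Ord w i v v' \/ dag_lt q0 delta Ord w i v' v) /\
    (forall v v', inVd q0 delta Qd w i v -> inVd q0 delta Qd w i v' -> v <> v' ->
       ~ (dag_lt q0 delta Ord w i v v' /\ dag_lt q0 delta Ord w i v' v)) /\
    (forall v v' v'', inVd q0 delta Qd w i v -> inVd q0 delta Qd w i v' ->
       inVd q0 delta Qd w i v'' -> v <> v' -> v' <> v'' -> v <> v'' ->
       dag_lt q0 delta Ord w i v v' -> dag_lt q0 delta Ord w i v' v'' ->
       dag_lt q0 delta Ord w i v v'').
Proof.
move=> _ [_ _ Ord_inj] i; split; [|split].
- by move=> v v' /andP [_ V_v] _ _; apply: dag_lt_total.
- move=> v v' /andP [Qd_v _] /andP [Qd_v' _] neq_vv' [lt_vv' lt_v'v].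
  exact/neq_vv'/(dag_lt_asym Ord_inj Qd_v Qd_v' lt_vv' lt_v'v).
- by move=> v v' v'' _ _ _ _ _ _; apply: dag_lt_trans.
Qed.
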